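(* Let $u \in \mathbb{N}$ and let $\mathrm{HFS}_u$ denote the universe of hereditarily finite sets with urelements $0,1,\dots,u-1$. Define $f_u : \mathrm{HFS}_u \to \mathbb{N}$ recursively by $f_u(x) = x$ if $x$ is an urelement (i.e. $x \in \{0,\dots,u-1\}$), and $f_u(x) = u + \sum_{a \in x} 2^{f_u(a)}$ if $x$ is a set. Then $f_u$ is a bijection between $\mathrm{HFS}_u$ and $\mathbb{N}$.
   Context: Urelements are objects having no elements, distinct from all sets; here the $u$ urelements are identified with the natural numbers $0,1,\dots,u-1$. $\mathrm{HFS}_u$ is the smallest collection containing these urelements and containing every finite set (possibly empty) all of whose elements belong to $\mathrm{HFS}_u$. For $u=0$ there are no urelements and $\mathrm{HFS}_0$ is the universe of pure hereditarily finite sets, with $f_0$ being Ackermann's encoding $f(x)=\sum_{a\in x}2^{f(a)}$ (so $f(\emptyset)=0$). $\mathbb{N}=\{0,1,2,\dots\}$. *)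

From mathcomp Require Import all_boot.
Set Implicit Arguments. Unset Strict Implicit. Unset Printing Implicit Defensive.

(* Raw syntax of hereditarily finite sets with urelements:
   [Ur n] is the urelement n, [HSet s] is the set whose elements are
   (the values of) the members of the finite list [s]. *)
Inductive hf : Type :=
| Ur of nat
| HSet of seq hf.

Fixpoint hf_eqb (x y : hf) {struct x} : bool :=
  match x, y with
  | Ur m, Ur n => m == n
  | HSet s, HSet t =>
      all (fun a => has (fun b => hf_eqb a b) t) s &&
      all (fun b => has (fun a => hf_eqb a b) s) t
  | _, _ => false
  end.

(* x is an element of HFS_u: all urelements occurring in x are < u. *)
Fixpoint hf_wf (u : nat) (x : hf) : bool :=
  match x with
  | Ur n => n < u
  | HSet s => all (hf_wf u) s
  end.

(* f_u(x) = x for an urelement, and u + sum_{a in x} 2^{f_u(a)} for a set,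
   where the sum ranges over the DISTINCT elements of x (each extensional
   equality class among the listed members is counted once). *)
Fixpoint f_hf (u : nat) (x : hf) {struct x} : nat :=
  match x with
  | Ur n => n
  | HSet s =>
      let fix go (l seen : seq hf) : nat :=
        match l with
        | [::] => 0
        | a :: l' =>
            (if has (hf_eqb a) seen then 0 else 2 ^ f_hf u a) + go l' (a :: seen)
        end
      in u + go s [::]
  end.

From mathcomp Require Import all_boot zify.

(* Every natural
   number is uniquely a sum of distinct powers of two, so by induction on
   depth two sets are extensionally equal exactly when their codes are; and
   every [n >= u] codes the set of preimages of the bits of [n - u], each of
   which is smaller than [n]. *)

Definition sum_pow2 (r : seq nat) : nat := \sum_(v <- r) 2 ^ v.

Lemma sum_pow2_split N r : uniq r ->
  sum_pow2 r = (N \in r) * 2 ^ N + sum_pow2 (filter (predC1 N) r).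
Proof.
move=> r_uniq; rewrite /sum_pow2; have [Nr|Nr] := boolP (N \in r).
  by rewrite (perm_big _ (perm_to_rem Nr)) big_cons rem_filter // mul1n.
rewrite mul0n add0n; congr bigop; apply/esym/all_filterP/allP => v vr /=.
by apply: contraNneq Nr => <-.
Qed.

Lemma all_filter_below {N r} : all (fun v => v < N.+1) r ->
  all (fun v => v < N) (filter (predC1 N) r).
Proof.
move=> /allP r_below; apply/allP => v; rewrite mem_filter /= => /andP[vN vr].
by rewrite ltn_neqAle vN -ltnS r_below.
Qed.

Lemma sum_pow2_lt {N r} : uniq r -> all (fun v => v < N) r -> sum_pow2 r < 2 ^ N.
Proof.
elim: N r => [|N IH] r r_uniq r_below.
  by case: r r_uniq r_below => //; rewrite /sum_pow2 big_nil.
have lt_rest : sum_pow2 (filter (predC1 N) r) < 2 ^ N.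
  by apply: IH; [rewrite filter_uniq | exact: all_filter_below].
rewrite (sum_pow2_split N) // expnS; case: (N \in r); lia.
Qed.

Lemma mem_lt_sum_pow2 {r v} : uniq r -> v \in r -> v < sum_pow2 r.
Proof.
move=> r_uniq vr; rewrite (sum_pow2_split v) // vr mul1n.
by apply: ltn_addr; rewrite ltn_expl.
Qed.

(* The bit [N] is present in both sums or in neither, since the remaining
   bits add up to less than [2 ^ N]. *)
Lemma sum_pow2_inj_below N r1 r2 : uniq r1 -> uniq r2 ->
  all (fun v => v < N) r1 -> all (fun v => v < N) r2 ->
  sum_pow2 r1 = sum_pow2 r2 -> r1 =i r2.
Proof.
elim: N r1 r2 => [|N IH] r1 r2 uniq1 uniq2 below1 below2.
  by case: r1 {uniq1} below1; case: r2 {uniq2} below2.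
have below1' := all_filter_below below1; have below2' := all_filter_below below2.
have uniq1' : uniq (filter (predC1 N) r1) by rewrite filter_uniq.
have uniq2' : uniq (filter (predC1 N) r2) by rewrite filter_uniq.
have lt1 := sum_pow2_lt uniq1' below1'; have lt2 := sum_pow2_lt uniq2' below2'.
rewrite (sum_pow2_split N r1) // (sum_pow2_split N r2) // => eq_sum.
have [eqN eq_rest] : (N \in r1) = (N \in r2) /\
    sum_pow2 (filter (predC1 N) r1) = sum_pow2 (filter (predC1 N) r2).
  by move: eq_sum lt1 lt2; case: (N \in r1); case: (N \in r2); lia.
move=> v; have [->|vN] := eqVneq v N; first exact: eqN.
by have := IH _ _ uniq1' uniq2' below1' below2' eq_rest v; rewrite !mem_filter /= vN.
Qed.

Lemma eq_sum_pow2P {r1 r2} : uniq r1 -> uniq r2 ->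
  reflect (r1 =i r2) (sum_pow2 r1 == sum_pow2 r2).
Proof.
move=> uniq1 uniq2; apply: (iffP eqP) => [eq_sum|eq_r].
  apply: (@sum_pow2_inj_below (sum_pow2 r1)) => //; apply/allP => v vr.
    exact: mem_lt_sum_pow2.
  by rewrite eq_sum; apply: mem_lt_sum_pow2.
by apply: perm_big; apply: uniq_perm.
Qed.

Lemma sum_pow2_surj m : exists2 r, uniq r & sum_pow2 r = m.
Proof.
elim/ltn_ind: m => -[|m] IH; first by exists [::]; rewrite // /sum_pow2 big_nil.
have [r r_uniq sum_r] : exists2 r, uniq r & sum_pow2 r = m.+1./2.
  by apply: IH; rewrite ltn_half_double -addnn addSn ltnS leq_addl.
have shift_uniq : uniq (map succn r) by rewrite map_inj_uniq //; apply: succn_inj.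
have sum_shift : sum_pow2 (map succn r) = m.+1./2.*2.
  by rewrite -sum_r -mul2n /sum_pow2 big_map big_distrr; apply: eq_bigr => v _; rewrite expnS.
have := odd_double_half m.+1; case: (odd m.+1) => /= <-.
  exists (0 :: map succn r); last by rewrite /sum_pow2 big_cons -/(sum_pow2 _) sum_shift.
  by rewrite /= shift_uniq andbT; apply/mapP => -[].
by exists (map succn r).
Qed.

Lemma big_undup_cons (R : Type) (idx : R) (op : Monoid.com_law idx)
    (T : eqType) (x : T) s (P : pred T) (F : T -> R) :
  \big[op/idx]_(v <- undup (x :: s) | P v) F v =
  op (if P x then F x else idx) (\big[op/idx]_(v <- undup s | P v && (v != x)) F v).
Proof.
rewrite /=; have [xs|xs] := boolP (x \in s); last first.
  have -> : \big[op/idx]_(v <- undup s | P v && (v != x)) F v =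
            \big[op/idx]_(v <- undup s | P v) F v.
    rewrite big_seq_cond [RHS]big_seq_cond; apply: eq_bigl => v.
    by case: (boolP (v \in undup s)) => //=; rewrite mem_undup => /(memPn xs) ->; rewrite andbT.
  by rewrite big_cons; case: (P x); rewrite ?Monoid.mul1m.
rewrite (perm_big _ (perm_to_rem (_ : x \in undup s))) ?mem_undup // big_cons.
rewrite rem_filter ?undup_uniq // big_filter_cond (eq_bigl (fun v => P v && (v != x))).
  by case: (P x); rewrite ?Monoid.mul1m.
by move=> v; rewrite andbC.
Qed.

Lemma eq_in_has_pred {T : Type} {P a1 a2 : pred T} {s} :
  all P s -> {in P, a1 =1 a2} -> has a1 s = has a2 s.
Proof. by move=> + eq_a; elim: s => //= b s IH /andP[Pb Ps]; rewrite eq_a // IH. Qed.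

Lemma eq_in_all_pred {T : Type} {P a1 a2 : pred T} {s} :
  all P s -> {in P, a1 =1 a2} -> all a1 s = all a2 s.
Proof. by move=> + eq_a; elim: s => //= b s IH /andP[Pb Ps]; rewrite eq_a // IH. Qed.

Lemma exists_map_preimage (T : Type) (U : eqType) (P : pred T) (f : T -> U) r :
  (forall v, v \in r -> exists2 x, P x & f x = v) -> exists2 s, all P s & map f s = r.
Proof.
elim: r => [|v r IH] preim; first by exists [::].
have [x Px fx] := preim v (mem_head _ _).
have [s Ps fs] : exists2 s, all P s & map f s = r.
  by apply: IH => w wr; apply: preim; rewrite in_cons wr orbT.
by exists (x :: s); rewrite /= ?Px ?fx ?fs.
Qed.

Fixpoint hf_depth (x : hf) : nat :=
  if x is HSet s then (foldr maxn 0 (map hf_depth s)).+1 else 0.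

Lemma hf_depth_elems n s : hf_depth (HSet s) <= n.+1 -> all (fun a => hf_depth a <= n) s.
Proof.
elim: s => [|a s IH] //=; rewrite ltnS geq_max => /andP[da ds].
by rewrite da IH.
Qed.

Section Encoding.

Variable u : nat.
Local Notation f := (f_hf u).

(* A copy of the local fixpoint in [f_hf], so that [f_hf_set] holds by
   conversion. *)
Fixpoint fresh_pow2_sum (l seen : seq hf) : nat :=
  if l is a :: l' then
    (if has (hf_eqb a) seen then 0 else 2 ^ f a) + fresh_pow2_sum l' (a :: seen)
  else 0.

Lemma f_hf_set s : f (HSet s) = u + fresh_pow2_sum s [::].
Proof. by []. Qed.

Section Compatible.

Context {P : pred hf}.
Hypothesis hf_eqb_compat : {in P &, forall a b, hf_eqb a b = (f a == f b)}.

Lemma has_hf_eqb a s : P a -> all P s -> has (hf_eqb a) s = (f a \in map f s).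
Proof.
move=> Pa Ps; rewrite -has_pred1 has_map; apply: (eq_in_has_pred Ps) => b Pb.
by rewrite /= hf_eqb_compat // eq_sym.
Qed.

Lemma fresh_pow2_sumE l seen : all P l -> all P seen ->
  fresh_pow2_sum l seen = \sum_(v <- undup (map f l) | v \notin map f seen) 2 ^ v.
Proof.
elim: l seen => [|a l IH] seen /=; first by rewrite big_nil.
move=> /andP[Pa Pl] Pseen; rewrite big_undup_cons has_hf_eqb // IH /= ?Pa //.
rewrite (eq_bigl (fun v => (v \notin map f seen) && (v != f a))) => [|v].
  by case: (f a \in map f seen).
by rewrite in_cons negb_or andbC.
Qed.

Lemma f_hf_setE s : all P s -> f (HSet s) = u + sum_pow2 (undup (map f s)).
Proof. by move=> Ps; rewrite f_hf_set fresh_pow2_sumE. Qed.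

Lemma hf_eqb_setE s t : all P s -> all P t ->
  hf_eqb (HSet s) (HSet t) = all (mem (map f t)) (map f s) && all (mem (map f s)) (map f t).
Proof.
move=> Ps Pt; rewrite /= !all_map; congr andb.
  by apply: (eq_in_all_pred Ps) => a Pa; rewrite /= has_hf_eqb.
apply: (eq_in_all_pred Pt) => b Pb; rewrite /= -has_pred1 has_map.
by apply: (eq_in_has_pred Ps) => a Pa; rewrite /= hf_eqb_compat.
Qed.

End Compatible.

(* The deduplication inside [f_hf (HSet t)] compares elements of [t] with
   each other, so the induction is on a common depth bound of [x] and [y]
   rather than on [x] alone. *)
Lemma hf_eqb_depth n x y : hf_depth x <= n -> hf_depth y <= n ->
  hf_wf u x -> hf_wf u y -> hf_eqb x y = (f x == f y).
Proof.
elim: n x y => [|n IH] [m|s] [k|t] //.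
- by move=> _ _ mu _; rewrite ltn_eqF // (leq_trans mu) ?leq_addr.
- by move=> _ _ _ ku; rewrite gtn_eqF // (leq_trans ku) ?leq_addr.
move=> ds dt ws wt; pose P := predI (fun a => hf_depth a <= n) (hf_wf u).
have compat : {in P &, forall a b, hf_eqb a b = (f a == f b)}.
  by move=> a b /andP[da wa] /andP[db wb]; apply: IH.
have Ps : all P s by rewrite all_predI hf_depth_elems.
have Pt : all P t by rewrite all_predI hf_depth_elems.
rewrite (hf_eqb_setE compat _ _ Ps Pt).
rewrite !(f_hf_setE compat) // eqn_add2l.
apply/idP/idP => [/andP[/allP st /allP ts]|/(eq_sum_pow2P (undup_uniq _) (undup_uniq _)) eq_f].
  apply/(eq_sum_pow2P (undup_uniq _) (undup_uniq _)) => v.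
  by rewrite !mem_undup; apply/idP/idP => [/st|/ts].
have eq_ft : map f s =i map f t by move=> v; have := eq_f v; rewrite !mem_undup.
by apply/andP; split; apply/allP => v; rewrite /= eq_ft.
Qed.

Lemma hf_eqbE {x y} : hf_wf u x -> hf_wf u y -> hf_eqb x y = (f x == f y).
Proof. exact: hf_eqb_depth (leq_maxl _ _) (leq_maxr _ _). Qed.

Lemma f_hf_surj n : exists2 x, hf_wf u x & f x = n.
Proof.
elim/ltn_ind: n => n IH; have [nu|un] := ltnP n u; first by exists (Ur n).
have [r r_uniq sum_r] := sum_pow2_surj (n - u).
have [s ws fs] : exists2 s, all (hf_wf u) s & map f s = r.
  apply: exists_map_preimage => v vr; apply: IH.
  by rewrite (leq_trans (mem_lt_sum_pow2 r_uniq vr)) // sum_r leq_subr.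
exists (HSet s) => //; rewrite (@f_hf_setE (hf_wf u) _) // ?fs ?undup_id ?sum_r ?subnKC //.
by move=> a b; apply: hf_eqbE.
Qed.

End Encoding.

Theorem mainTheorem1 (u : nat) :
  (forall x y : hf, hf_wf u x -> hf_wf u y -> hf_eqb x y -> f_hf u x = f_hf u y) /\
  (forall x y : hf, hf_wf u x -> hf_wf u y -> f_hf u x = f_hf u y -> hf_eqb x y) /\
  (forall n : nat, exists x : hf, hf_wf u x /\ f_hf u x = n).
Proof.
split; [|split].
- by move=> x y wx wy; rewrite (hf_eqbE _ wx wy) => /eqP.
- by move=> x y wx wy fxy; rewrite (hf_eqbE _ wx wy) fxy.
- by move=> n; have [x wx fx] := f_hf_surj u n; exists x.
Qed.
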